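(* Let $F:P\to\mathbb R^{\mathbf C}$ be a nontrivial, $\mathbb R$-linear, neutral cardinal welfare function. Then $F$ satisfies the IIA criterion if and only if $|\lambda|=2$.
   Context: Fix an integer $n\ge 2$ and a set $\mathbf C$ of $n$ candidates. Fix a composition $\lambda=(\lambda_1,\dots,\lambda_m)$ of $n$ (positive integers with $\sum_i\lambda_i=n$), write $|\lambda|=m$ and $[m]=\{1,\dots,m\}$. A ballot is a function $b:\mathbf C\to[m]$ with $|b^{-1}(i)|=\lambda_i$ for every $i$; $\mathbf C_\lambda$ denotes the set of ballots. The profile space is $P=\mathbb R^{\mathbf C_\lambda}$ with basis $\{\delta_b\}$ (indicator functions) and inner product $\mathbf p\cdot\mathbf q=\sum_b\mathbf p(b)\mathbf q(b)$. For candidates $X,Y$: $\mathbf a_{X>Y}=\sum_{b:\,b(X)<b(Y)}\delta_b$. Two profiles are $X,Y$-equivalent, $\mathbf p\sim_{X,Y}\mathbf q$, if $(\mathbf p-\mathbf q)\cdot\mathbf a_{X>Y}=0$ and $(\mathbf p-\mathbf q)\cdot\mathbf a_{Y>X}=0$. A cardinal welfare function (CWF) is any map $F:P\to\mathbb R^{\mathbf C}$; it is trivial if for every $\mathbf p$ the function $F(\mathbf p):\mathbf C\to\mathbb R$ is constant. The symmetric group $S_{\mathbf C}$ acts on $\mathbf C_\lambda$ by $\sigma.b=b\circ\sigma^{-1}$, on $P$ by linearly extending $\sigma.\delta_b=\delta_{\sigma.b}$, and on $\mathbb R^{\mathbf C}$ by $(\sigma.f)(X)=f(\sigma^{-1}X)$;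 $F$ is neutral if $F(\sigma.\mathbf p)=\sigma.F(\mathbf p)$ for all $\sigma,\mathbf p$. $F$ satisfies the IIA criterion (independence of irrelevant alternatives) if for every ordered pair of distinct candidates $X,Y$ and all $\mathbf p,\mathbf q\in P$ with $\mathbf p\sim_{X,Y}\mathbf q$, $F(\mathbf p)(X)>F(\mathbf p)(Y)$ implies $F(\mathbf q)(X)>F(\mathbf q)(Y)$. *)

From HB Require Import structures.
From mathcomp Require Import all_boot all_order all_algebra all_fingroup.
Set Implicit Arguments. Unset Strict Implicit. Unset Printing Implicit Defensive.
Import Order.TTheory GRing.Theory Num.Theory.
Local Open Scope ring_scope.

Section Cwf.
Variables (R : realFieldType) (lam : seq nat) (C : finType).

(* A composition lam of n = #|C| (positivity and sum are hypotheses of the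
   theorem); m = |lam| = size lam; [m] is represented by 'I_(size lam)
   (0-based). *)
Definition is_ballot (b : {ffun C -> 'I_(size lam)}) : bool :=
  [forall i : 'I_(size lam), #|[pred x | b x == i]| == nth 0%N lam i].

Local Notation ballot := {b : {ffun C -> 'I_(size lam)} | is_ballot b}.

Local Notation profile := {ffun ballot -> R}.

Definition dot (p q : profile) : R := \sum_b p b * q b.
Definition a_gt (X Y : C) : profile :=
  [ffun b : ballot => if (val b X < val b Y)%N then 1 else 0].

Definition equivXY (X Y : C) (p q : profile) : Prop :=
  dot (p - q) (a_gt X Y) = 0 /\ dot (p - q) (a_gt Y X) = 0.

Lemma bact_ballot (s : {perm C}) (b : ballot) :
  is_ballot [ffun x => val b ((s^-1)%g x)].
Proof.
apply/forallP => i; case: b => b /= /forallP /(_ i) /eqP <-.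
apply/eqP.
rewrite -(card_image (@perm_inj _ (s^-1)%g)); apply/eq_card => x.
apply/imageP/idP.
  by case=> y; rewrite inE ffunE => H ->.
by move=> H; exists (s x); rewrite ?permK // unfold_in /= ffunE permK.
Qed.

Definition bact (s : {perm C}) (b : ballot) : ballot :=
  exist _ [ffun x => val b ((s^-1)%g x)] (bact_ballot s b).

(* action on profiles (linear extension of delta_b |-> delta_{sigma.b}):
   (sigma.p)(b) = p(sigma^{-1}.b) *)
Definition pact (s : {perm C}) (p : profile) : profile :=
  [ffun b => p (bact (s^-1)%g b)].

Definition fact (s : {perm C}) (f : {ffun C -> R}) : {ffun C -> R} :=
  [ffun X => f ((s^-1)%g X)].

Definition cwf_linear (F : profile -> {ffun C -> R}) : Prop :=
  forall (a : R) (p q : profile), F [ffun b => a * p b + q b] = [ffun X => a * F p X + F q X].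

Definition cwf_trivial (F : profile -> {ffun C -> R}) : Prop :=
  forall (p : profile) (X Y : C), F p X = F p Y.

Definition cwf_neutral (F : profile -> {ffun C -> R}) : Prop :=
  forall (s : {perm C}) (p : profile), F (pact s p) = fact s (F p).

Definition cwf_IIA (F : profile -> {ffun C -> R}) : Prop :=
  forall (X Y : C), X != Y -> forall p q : profile, equivXY X Y p q ->
    F p Y < F p X -> F q Y < F q X.

End Cwf.

Notation ballot lam C := {b : {ffun C -> 'I_(size lam)} | @is_ballot lam C b}.
Notation profile R lam C := {ffun ballot lam C -> R}.

From HB Require Import structures.
From mathcomp Require Import all_boot all_order all_algebra all_fingroup.
From mathcomp Require Import zify lra.
Set Implicit Arguments. Unset Strict Implicit. Unset Printing Implicit Defensive.
Import Order.TTheory GRing.Theory Num.Theory.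
Local Open Scope ring_scope.

(* By linearity, [F p X - F p Y] is the sum over ballots [b] of [p b] times the
   score gap of [X] over [Y] on the single ballot [b]; by neutrality and the
   transitivity of [S_C] on ballots, that gap only depends on the tiers [b X],
   [b Y] up to relabelling, and vanishes when [b X = b Y].  With two tiers it is
   therefore [k] times the sign of [b Y - b X], so [F p X - F p Y] is [k] times
   the pairwise tally, which [~_{X,Y}] preserves.  Conversely, IIA applied to
   [delta b1 - delta b2] against [0] forces the gap to take one value [k] on all
   strictly ordered pairs of a ballot; with three nonempty tiers [k + k = k],
   so [F] is trivial; with one tier [F] is trivial by neutrality. *)

Section BallotAction.
Variables (lam : seq nat) (C : finType).
Implicit Types (s t : {perm C}) (b : ballot lam C).

Lemma bactE s b x : val (bact s b) x = val b ((s^-1)%g x).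
Proof. by rewrite /= ffunE. Qed.

Lemma bactM s t b : bact (s * t)%g b = bact t (bact s b).
Proof. by apply: val_inj; apply/ffunP => x; rewrite /= !ffunE invMg permM. Qed.

Lemma bact1 b : bact 1%g b = b.
Proof. by apply: val_inj; apply/ffunP => x; rewrite /= !ffunE invg1 perm1. Qed.

Lemma bactK s : cancel (@bact lam C s) (bact (s^-1)%g).
Proof. by move=> b; rewrite -bactM mulgV bact1. Qed.

Lemma bactKV s : cancel (@bact lam C (s^-1)%g) (bact s).
Proof. by move=> b; rewrite -bactM mulVg bact1. Qed.

Lemma bact_tperm_tie X Y b : val b X = val b Y -> bact (tperm X Y) b = b.
Proof.
move=> tie; apply: val_inj; apply/ffunP => x; rewrite bactE tpermV.
by case: tpermP => [->|->|]; rewrite ?tie.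
Qed.

Definition disagree b1 b2 := [set x | val b1 x != val b2 x].

(* Both ballots put [#|b^-1(i)| = lam_i] candidates in tier [i = b2 u]; as [u]
   is not among those of [b1], some [v] in tier [i] of [b1] is not in tier [i]
   of [b2], and swapping [u] and [v] repairs [u] without breaking anything. *)
Lemma disagree_tperm_proper b1 b2 u : u \in disagree b1 b2 ->
  exists2 v, v \in disagree b1 b2 &
    disagree (bact (tperm u v) b1) b2 \proper disagree b1 b2.
Proof.
rewrite inE => hu; pose i := val b2 u.
have /forallP/(_ i)/eqP card1 := valP b1; have /forallP/(_ i)/eqP card2 := valP b2.
have : ~~ ([pred x | val b1 x == i] \subset [pred x | val b2 x == i]).
  apply/negP => /subset_cardP; rewrite card1 card2 => /(_ erefl) /(_ u).
  by rewrite !inE eqxx (negbTE hu).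
case/subsetPn => v; rewrite !inE => /eqP hv1 hv2.
exists v; first by rewrite inE hv1 eq_sym.
apply/properP; split.
  apply/subsetP => x; rewrite !inE bactE tpermV.
  by case: tpermP => [->|->|//]; rewrite hv1 ?eqxx // => _; rewrite eq_sym.
by exists u; rewrite !inE ?bactE ?tpermV ?tpermL ?hv1 ?eqxx.
Qed.

Lemma disagree_eq0 b1 b2 : disagree b1 b2 = set0 -> b1 = b2.
Proof.
move=> h; apply: val_inj; apply/ffunP => x; apply/eqP; apply: contraT => hx.
have : x \in disagree b1 b2 by rewrite inE.
by rewrite h inE.
Qed.

Lemma bact_transitive b1 b2 :
  exists2 s, bact s b1 = b2 & forall x, val b1 x = val b2 x -> s x = x.
Proof.
move: {2}#|disagree b1 b2| (leqnn #|disagree b1 b2|) => n.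
elim: n b1 => [|n IH] b1 hn;
  have [/disagree_eq0 ->|/set0Pn [u hu]] := eqVneq (disagree b1 b2) set0;
  try by exists 1%g => [|x _]; rewrite ?bact1 ?perm1.
  by move: hn; rewrite leqn0 cards_eq0 => /eqP h; rewrite h inE in hu.
have [v hv hproper] := disagree_tperm_proper hu.
have [s hs hfix] := IH _ (leq_trans (proper_card hproper) hn).
exists (tperm u v * s)%g => [|x hx]; first by rewrite bactM.
have hxu : u != x by apply: contraTneq hu => ->; rewrite inE hx negbK.
have hxv : v != x by apply: contraTneq hv => ->; rewrite inE hx negbK.
by rewrite permM tpermD // hfix // bactE tpermV tpermD.
Qed.

Lemma ballot_tier_nonempty (hpos : all (fun k => (0 < k)%N) lam) b k :
  (k < size lam)%N -> exists x, nat_of_ord (val b x) = k.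
Proof.
move=> hk; have /forallP/(_ (Ordinal hk))/eqP hcard := valP b.
have : (0 < nth 0%N lam k)%N by apply: (allP hpos); apply: mem_nth.
rewrite -[nth _ _ _]/(nth 0%N lam (Ordinal hk)) -hcard => /card_gt0P [x].
by rewrite inE => /eqP hx; exists x; rewrite hx.
Qed.

End BallotAction.

Lemma exists_perm2 (C : finType) (X Y x y : C) :
  X != Y -> x != y -> exists t : {perm C}, t X = x /\ t Y = y.
Proof.
move=> hXY hxy; pose y' := tperm X x Y.
have hy' : x != y' by rewrite /y' -{1}(tpermL X x) (inj_eq perm_inj).
exists (tperm X x * tperm y' y)%g; rewrite !permM -/y' tpermL.
by rewrite tpermL tpermD // eq_sym.
Qed.

Section Profiles.
Variables (R : realFieldType) (lam : seq nat) (C : finType).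
Implicit Types (b : ballot lam C) (p q : profile R lam C).

Definition delta b : profile R lam C := [ffun b' => (b' == b)%:R].

Lemma pact_delta (s : {perm C}) b : pact s (delta b) = delta (bact s b).
Proof. by apply/ffunP => b'; rewrite !ffunE (can2_eq (@bactKV _ _ s) (@bactK _ _ s)). Qed.

Lemma dot_delta b q : dot (delta b) q = q b.
Proof.
rewrite /dot (bigD1 b) //= big1 => [|b' hb]; first by rewrite ffunE eqxx mul1r addr0.
by rewrite ffunE (negbTE hb) mul0r.
Qed.

Lemma dotBl p q (a : profile R lam C) : dot (p - q) a = dot p a - dot q a.
Proof. by rewrite /dot -sumrB; apply: eq_bigr => b _; rewrite !ffunE mulrBl. Qed.

Lemma equivXY_delta X Y b1 b2 :
  (val b1 X < val b1 Y)%N -> (val b2 X < val b2 Y)%N ->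
  equivXY X Y (delta b1 - delta b2) 0.
Proof.
move=> h1 h2; have n1 := leq_gtF (ltnW h1); have n2 := leq_gtF (ltnW h2).
by split; rewrite subr0 dotBl !dot_delta !ffunE ?h1 ?h2 ?n1 ?n2 subrr.
Qed.

Variable F : profile R lam C -> {ffun C -> R}.
Hypothesis Flin : cwf_linear F.

Lemma F_add p q : F (p + q) = F p + F q.
Proof.
have -> : p + q = [ffun b => 1 * p b + q b] by apply/ffunP => b; rewrite !ffunE mul1r.
by rewrite Flin; apply/ffunP => X; rewrite !ffunE mul1r.
Qed.

Lemma F_0 : F 0 = 0.
Proof. by apply: (addrI (F 0)); rewrite -F_add !addr0. Qed.

Lemma F_sub p q : F (p - q) = F p - F q.
Proof. by rewrite -[in RHS](subrK q p) (F_add (p - q)) addrK. Qed.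

Lemma F_sum (I : Type) (r : seq I) (g : I -> profile R lam C) :
  F (\sum_(i <- r) g i) = \sum_(i <- r) F (g i).
Proof. by elim: r => [|i r IH]; rewrite ?big_nil ?F_0 // !big_cons F_add IH. Qed.

Lemma F_decomp p Z : F p Z = \sum_b p b * F (delta b) Z.
Proof.
have pE : p = \sum_b [ffun b' => p b * delta b b' + (0 : profile R lam C) b'].
  apply/ffunP => b'; rewrite sum_ffunE (bigD1 b') //= big1 => [|b hb].
    by rewrite !ffunE eqxx mulr1 !addr0.
  by rewrite !ffunE eq_sym (negbTE hb) mulr0 addr0.
rewrite {1}pE F_sum sum_ffunE; apply: eq_bigr => b _.
by rewrite Flin F_0 !ffunE addr0.
Qed.

Definition score_gap b X Y := F (delta b) X - F (delta b) Y.

Lemma score_gap_decomp p X Y : F p X - F p Y = \sum_b p b * score_gap b X Y.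
Proof. by rewrite !F_decomp -sumrB; apply: eq_bigr => b _; rewrite mulrBr. Qed.

Lemma cwf_trivial_score_gap0 :
  (forall b X Y, score_gap b X Y = 0) -> cwf_trivial F.
Proof.
move=> gap0 p X Y; apply/eqP; rewrite -subr_eq0 score_gap_decomp.
by rewrite big1 // => b _; rewrite gap0 mulr0.
Qed.

Hypothesis Fneu : cwf_neutral F.

Lemma score_gap_bact (s : {perm C}) b X Y :
  score_gap (bact s b) X Y = score_gap b ((s^-1)%g X) ((s^-1)%g Y).
Proof. by rewrite /score_gap -pact_delta Fneu !ffunE. Qed.

Lemma score_gap_tie b X Y : val b X = val b Y -> score_gap b X Y = 0.
Proof.
move=> tie; rewrite /score_gap -{1}(bact_tperm_tie tie) -pact_delta Fneu ffunE.
by rewrite tpermV tpermL subrr.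
Qed.

Lemma score_gap_swap b X Y :
  score_gap (bact (tperm X Y) b) X Y = - score_gap b X Y.
Proof. by rewrite score_gap_bact tpermV tpermL tpermR /score_gap opprB. Qed.

Lemma score_gap_agree b1 b2 X Y : val b1 X = val b2 X -> val b1 Y = val b2 Y ->
  score_gap b1 X Y = score_gap b2 X Y.
Proof.
move=> hX hY; have [s sb2 hfix] := bact_transitive b2 b1.
by rewrite -sb2 score_gap_bact -{1}(hfix X (esym hX)) -{1}(hfix Y (esym hY)) !permK.
Qed.

(* For [m = 2], [b X < b Y] forces [X] into tier 0 and [Y] into tier 1, so all
   such ballots agree on [X] and [Y]. *)
Lemma score_gap_two_tiers (hm : size lam = 2%N) X Y : exists k, forall b,
  score_gap b X Y = k * (a_gt R lam X Y b - a_gt R lam Y X b).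
Proof.
have agree_lt b1 b2 : (val b1 X < val b1 Y)%N -> (val b2 X < val b2 Y)%N ->
    score_gap b1 X Y = score_gap b2 X Y.
  have := ltn_ord (val b1 Y); have := ltn_ord (val b2 Y) => h2 h1 l1 l2.
  by apply: score_gap_agree; apply: ord_inj; lia.
have [/existsP [b0 hb0]|/existsPn none] :=
  boolP [exists b : ballot lam C, (val b X < val b Y)%N].
- exists (score_gap b0 X Y) => b; rewrite !ffunE.
  case: ltngtP => [hb|hb|/ord_inj/score_gap_tie ->]; last by rewrite subrr mulr0.
    by rewrite (agree_lt b b0) ?subr0 ?mulr1.
  rewrite -[LHS]opprK -score_gap_swap (agree_lt _ b0) ?sub0r ?mulrN1 //.
  by rewrite !bactE tpermV tpermL tpermR.
- exists 0 => b; rewrite mul0r.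
  case: (ltngtP (val b X) (val b Y)) => [hb|hb|/ord_inj]; last exact: score_gap_tie.
    by move: (none b); rewrite hb.
  by move: (none (bact (tperm X Y) b)); rewrite !bactE tpermV tpermL tpermR hb.
Qed.

Lemma cwf_IIA_two_tiers : size lam = 2%N -> cwf_IIA F.
Proof.
move=> hm X Y _ p q [eXY eYX]; have [k gapE] := score_gap_two_tiers hm X Y.
have tallyE r : F r X - F r Y = k * (dot r (a_gt R lam X Y) - dot r (a_gt R lam Y X)).
  rewrite score_gap_decomp /dot -sumrB mulr_sumr; apply: eq_bigr => b _.
  by rewrite gapE -mulrBr mulrCA.
have := tallyE (p - q); rewrite eXY eYX subrr mulr0 F_sub !ffunE.
by move: (F p X) (F p Y) (F q X) (F q Y) => ? ? ? ?; lra.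
Qed.

Section IIA.
Hypothesis Fiia : cwf_IIA F.

(* Compare [delta b1 - delta b2] with the zero profile, which is equivalent to
   it for the pair [X, Y]. *)
Lemma iia_score_gap_eq X Y b1 b2 : X != Y ->
  (val b1 X < val b1 Y)%N -> (val b2 X < val b2 Y)%N ->
  score_gap b1 X Y = score_gap b2 X Y.
Proof.
move=> hXY h1 h2.
have gapB (c1 c2 : ballot lam C) :
    F (delta c1 - delta c2) X - F (delta c1 - delta c2) Y =
    score_gap c1 X Y - score_gap c2 X Y.
  by rewrite F_sub !ffunE /score_gap; lra.
have no_gain (c1 c2 : ballot lam C) :
    (val c1 X < val c1 Y)%N -> (val c2 X < val c2 Y)%N ->
    ~ score_gap c2 X Y < score_gap c1 X Y.
  move=> l1 l2; rewrite -subr_gt0 -gapB subr_gt0 => hlt.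
  by have := Fiia hXY (equivXY_delta l1 l2) hlt; rewrite F_0 !ffunE ltxx.
by case: (ltgtP (score_gap b1 X Y) (score_gap b2 X Y)) => // hlt;
  [case: (no_gain b2 b1) | case: (no_gain b1 b2)].
Qed.

Lemma iia_score_gap_uniform b x1 y1 x2 y2 :
  (val b x1 < val b y1)%N -> (val b x2 < val b y2)%N ->
  score_gap b x1 y1 = score_gap b x2 y2.
Proof.
move=> h1 h2.
have [hxy1 hxy2] : x1 != y1 /\ x2 != y2.
  by split; apply/eqP => e; [move: h1 | move: h2]; rewrite e ltnn.
have [t [tx ty]] := exists_perm2 hxy1 hxy2.
have hbt : (val (bact (t^-1)%g b) x1 < val (bact (t^-1)%g b) y1)%N.
  by rewrite !bactE invgK tx ty.
by rewrite (iia_score_gap_eq hxy1 h1 hbt) score_gap_bact invgK tx ty.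
Qed.

(* Tiers 0, 1, 2 give candidates with gaps [k + k = k]. *)
Lemma iia_score_gap0 (hpos : all (fun k => (0 < k)%N) lam) :
  (2 < size lam)%N -> forall b X Y, score_gap b X Y = 0.
Proof.
move=> hm b X Y.
have [e0 he0] := ballot_tier_nonempty hpos b (ltn_trans (isT : (0 < 2)%N) hm).
have [e1 he1] := ballot_tier_nonempty hpos b (ltn_trans (isT : (1 < 2)%N) hm).
have [e2 he2] := ballot_tier_nonempty hpos b hm.
have gapE x y : (val b x < val b y)%N -> score_gap b x y = score_gap b e0 e1.
  by move=> hxy; apply: iia_score_gap_uniform; rewrite ?he0 ?he1.
have k0 : score_gap b e0 e1 = 0.
  have := gapE e0 e2; have := gapE e1 e2; rewrite he0 he1 he2 /score_gap.
  by move=> /(_ isT) + /(_ isT); lra.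
case: (ltngtP (val b X) (val b Y)) => [hb|hb|/ord_inj]; last exact: score_gap_tie.
  by rewrite gapE // k0.
have -> : score_gap b X Y = - score_gap b Y X by rewrite /score_gap opprB.
by rewrite gapE // k0 oppr0.
Qed.

End IIA.
End Profiles.

Theorem mainTheorem8 (R : realFieldType) (C : finType) (lam : seq nat)
  (hn : (2 <= #|C|)%N)
  (hpos : all (fun k => (0 < k)%N) lam)
  (hsum : sumn lam = #|C|)
  (F : profile R lam C -> {ffun C -> R})
  (Flin : cwf_linear F) (Fneu : cwf_neutral F) (Fnt : ~ cwf_trivial F) :
  cwf_IIA F <-> size lam = 2%N.
Proof.
split; last exact: cwf_IIA_two_tiers.
move=> Fiia; have [hm|hm|//] := ltngtP (size lam) 2; exfalso; apply: Fnt;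
  apply: cwf_trivial_score_gap0 => //; last exact: iia_score_gap0.
move=> b X Y; apply: score_gap_tie => //; apply: ord_inj.
by have := ltn_ord (val b X); have := ltn_ord (val b Y); lia.
Qed.
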